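(* Let $(\mathcal{X},d)$ be a complete separable metric space, $n \ge 2$, and let $P_X$ put mass $1/n$ on each of $n$ distinct points $x_1, \ldots, x_n \in \mathcal{X}$. Then $D(x_1; P_X) \leq 1 + \left(1 - \frac{1}{n} \right)\left(1 - \frac{3}{n} \right)$, with equality if and only if $d(x_i, x_j) = d(x_i, x_1) + d(x_1, x_j)$ for all distinct $i, j \in \{ 2, \ldots, n \}$.
   Context: Define $h: \mathcal{X}^3 \to \mathbb{R}$ by $h(x_1, x_2, x_3) := \mathbb{I}( x_3 \notin \{x_1, x_2\} ) \dfrac{ d^2(x_1, x_3) + d^2(x_2, x_3) - d^2(x_1, x_2) }{d(x_1, x_3)\, d(x_2, x_3) }$, where $h := 0$ when $x_3 \in \{x_1,x_2\}$. The metric spatial depth of $\mu \in \mathcal{X}$ with respect to a probability distribution $P_X$ on $\mathcal{X}$ is $D(\mu; P_X) := 1 - \frac{1}{2} \mathrm{E} \{ h(X_1, X_2, \mu) \}$, where $X_1, X_2 \sim P_X$ are independent. *)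

From Stdlib Require Import Reals Lra Classical ClassicalEpsilon.
Open Scope R_scope.

Record is_metric {X : Type} (d : X -> X -> R) : Prop := {
  met_nonneg : forall x y, 0 <= d x y;
  met_eq0 : forall x y, d x y = 0 <-> x = y;
  met_sym : forall x y, d x y = d y x;
  met_tri : forall x y z, d x z <= d x y + d y z }.

Definition metric_complete {X : Type} (d : X -> X -> R) : Prop :=
  forall u : nat -> X,
    (forall eps, 0 < eps -> exists N, forall m k, (N <= m)%nat -> (N <= k)%nat ->
        d (u m) (u k) < eps) ->
    exists l, forall eps, 0 < eps -> exists N, forall m, (N <= m)%nat -> d (u m) l < eps.

(* Separability: there is a countable dense subset (X nonempty case suffices
   here, since the theorem supplies points of X). *)
Definition metric_separable {X : Type} (d : X -> X -> R) : Prop :=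
  exists s : nat -> X, forall x eps, 0 < eps -> exists k, d x (s k) < eps.

Definition h_kernel {X : Type} (d : X -> X -> R) (x1 x2 x3 : X) : R :=
  if excluded_middle_informative (x3 = x1 \/ x3 = x2) then 0
  else (d x1 x3 ^ 2 + d x2 x3 ^ 2 - d x1 x2 ^ 2) / (d x1 x3 * d x2 x3).

Fixpoint sum_lt (n : nat) (f : nat -> R) : R :=
  match n with O => 0 | S m => sum_lt m f + f m end.

(* Metric spatial depth D(mu; P) for a finitely supported distribution P
   putting mass w k on the point y k, k < m:
   D = 1 - 1/2 E h(X1, X2, mu) with X1, X2 iid ~ P, i.e. the double sum. *)
Definition depth_discrete {X : Type} (d : X -> X -> R) (m : nat)
    (w : nat -> R) (y : nat -> X) (mu : X) : R :=
  1 - / 2 * sum_lt m (fun i => sum_lt m (fun j => w i * w j * h_kernel d (y i) (y j) mu)).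

(* Write a_i := d(x_i, x_1) > 0 for i >= 2.  At the center mu = x_1 the kernel
   h(x_i, x_j, x_1) vanishes when i = 1 or j = 1, equals 2 when i = j >= 2, and
   for distinct i, j >= 2 it equals  -2 + g_ij  with the "excess"
       g_ij = ((a_i + a_j)^2 - d(x_i,x_j)^2) / (a_i a_j),
   which is nonnegative by the triangle inequality and vanishes exactly when
   d(x_i,x_j) = a_i + a_j.  Summing the constant part over all pairs gives
       D(x_1) = 1 + (1 - 1/n)(1 - 3/n) - (1/(2 n^2)) * sum_{i,j} g_ij,
   so the bound holds, with equality iff every excess vanishes.

   In the Rocq statement points are indexed from 0, so
   x_1 is [x 0]. *)
From Stdlib Require Import Reals Lra Lia ClassicalEpsilon.
Open Scope R_scope.

Lemma sum_lt_ext n f g :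
  (forall k, (k < n)%nat -> f k = g k) -> sum_lt n f = sum_lt n g.
Proof.
  induction n as [|n IH]; simpl; intros H; auto.
  rewrite IH by (intros; apply H; lia). rewrite H by lia. reflexivity.
Qed.

Lemma sum_lt_plus n f g :
  sum_lt n (fun k => f k + g k) = sum_lt n f + sum_lt n g.
Proof. induction n as [|n IH]; simpl; [lra|]. rewrite IH; lra. Qed.

Lemma sum_lt_scal n c f : sum_lt n (fun k => c * f k) = c * sum_lt n f.
Proof. induction n as [|n IH]; simpl; [lra|]. rewrite IH; lra. Qed.

Lemma sum_lt_nonneg n f :
  (forall k, (k < n)%nat -> 0 <= f k) -> 0 <= sum_lt n f.
Proof.
  induction n as [|n IH]; simpl; intros H; [lra|].
  assert (0 <= f n) by (apply H; lia).
  assert (0 <= sum_lt n f) by (apply IH; intros; apply H; lia).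
  lra.
Qed.

Lemma sum_lt_eq0_iff n f :
  (forall k, (k < n)%nat -> 0 <= f k) ->
  sum_lt n f = 0 <-> forall k, (k < n)%nat -> f k = 0.
Proof.
  induction n as [|n IH]; simpl; intros H; [split; intros; [lia | lra]|].
  assert (Hfn : 0 <= f n) by (apply H; lia).
  assert (H' : forall k, (k < n)%nat -> 0 <= f k) by (intros; apply H; lia).
  pose proof (sum_lt_nonneg n f H') as Hs.
  specialize (IH H'). split.
  - intros Hsum k Hk.
    destruct (Nat.eq_dec k n) as [->|Hkn]; [lra|].
    apply IH; [lra | lia].
  - intros Hz. rewrite (proj2 IH) by (intros; apply Hz; lia).
    rewrite Hz by lia. lra.
Qed.

Definition dsum (n : nat) (f : nat -> nat -> R) : R :=
  sum_lt n (fun i => sum_lt n (f i)).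

Lemma dsum_nonneg n f :
  (forall i j, (i < n)%nat -> (j < n)%nat -> 0 <= f i j) -> 0 <= dsum n f.
Proof.
  intros H. apply sum_lt_nonneg; intros i Hi.
  apply sum_lt_nonneg; intros j Hj. auto.
Qed.

Lemma dsum_eq0_iff n f :
  (forall i j, (i < n)%nat -> (j < n)%nat -> 0 <= f i j) ->
  dsum n f = 0 <-> forall i j, (i < n)%nat -> (j < n)%nat -> f i j = 0.
Proof.
  intros H. unfold dsum.
  rewrite sum_lt_eq0_iff
    by (intros i Hi; apply sum_lt_nonneg; intros; auto).
  split.
  - intros Hrow i j Hi Hj. apply (proj1 (sum_lt_eq0_iff n (f i) (fun j Hj => H i j Hi Hj))); auto.
  - intros Hz i Hi. apply (proj2 (sum_lt_eq0_iff n (f i) (fun j Hj => H i j Hi Hj))); auto.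
Qed.

Section KernelAtCenter.

Context {X : Type} (d : X -> X -> R) (Hmet : is_metric d).

(* The amount by which h(y, z, mu) exceeds its lower bound -2. *)
Definition excess (y z mu : X) : R :=
  ((d y mu + d z mu) ^ 2 - d y z ^ 2) / (d y mu * d z mu).

Lemma dist_pos (y z : X) : y <> z -> 0 < d y z.
Proof.
  intros Hyz. destruct (met_nonneg d Hmet y z) as [|E]; auto.
  exfalso. apply Hyz, (met_eq0 d Hmet). auto.
Qed.

Lemma h_kernel_at_center (y z mu : X) :
  mu = y \/ mu = z -> h_kernel d y z mu = 0.
Proof.
  intros H. unfold h_kernel.
  destruct (excluded_middle_informative _); tauto.
Qed.

Lemma h_kernel_diag (y mu : X) : mu <> y -> h_kernel d y y mu = 2.
Proof.
  intros Hmu. pose proof (dist_pos y mu (not_eq_sym Hmu)).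
  unfold h_kernel.
  destruct (excluded_middle_informative _) as [[E|E]|_]; [tauto|tauto|].
  rewrite (proj2 (met_eq0 d Hmet y y) eq_refl). field. lra.
Qed.

Lemma h_kernel_excess (y z mu : X) :
  mu <> y -> mu <> z -> h_kernel d y z mu = excess y z mu - 2.
Proof.
  intros Hy Hz.
  pose proof (dist_pos y mu (not_eq_sym Hy)).
  pose proof (dist_pos z mu (not_eq_sym Hz)).
  unfold h_kernel, excess.
  destruct (excluded_middle_informative _) as [[E|E]|_]; [tauto|tauto|].
  field. lra.
Qed.

(* The triangle inequality d y z <= d y mu + d mu z makes the excess
   nonnegative, and it vanishes exactly when mu lies between y and z. *)
Lemma excess_nonneg (y z mu : X) : mu <> y -> mu <> z -> 0 <= excess y z mu.
Proof.
  intros Hy Hz.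
  pose proof (dist_pos y mu (not_eq_sym Hy)).
  pose proof (dist_pos z mu (not_eq_sym Hz)).
  pose proof (met_tri d Hmet y mu z). rewrite (met_sym d Hmet mu z) in *.
  pose proof (met_nonneg d Hmet y z).
  unfold excess. apply Rmult_le_pos; [nra|].
  left. apply Rinv_0_lt_compat. nra.
Qed.

Lemma excess_eq0_iff (y z mu : X) :
  mu <> y -> mu <> z ->
  excess y z mu = 0 <-> d y z = d y mu + d mu z.
Proof.
  intros Hy Hz.
  pose proof (dist_pos y mu (not_eq_sym Hy)).
  pose proof (dist_pos z mu (not_eq_sym Hz)).
  pose proof (met_tri d Hmet y mu z). rewrite (met_sym d Hmet mu z) in *.
  pose proof (met_nonneg d Hmet y z).
  unfold excess. split.
  - intros E. apply (Rmult_eq_compat_r (d y mu * d z mu)) in E.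
    field_simplify in E; [nra | split; lra].
  - intros ->. field. lra.
Qed.

End KernelAtCenter.

Definition nonzero (j : nat) : R := if Nat.eqb j 0 then 0 else 1.
Definition kronecker (i j : nat) : R := if Nat.eqb i j then 1 else 0.

Lemma sum_nonzero n : (1 <= n)%nat -> sum_lt n nonzero = INR n - 1.
Proof.
  induction n as [|n IH]; intros H; [lia|]. simpl sum_lt.
  destruct n as [|n]; [unfold nonzero; simpl; lra|].
  rewrite IH by lia. unfold nonzero. simpl Nat.eqb. rewrite !S_INR. lra.
Qed.

Lemma sum_kronecker n i : (i < n)%nat -> sum_lt n (kronecker i) = 1.
Proof.
  induction n as [|n IH]; intros H; [lia|]. simpl sum_lt. unfold kronecker at 2.
  destruct (Nat.eqb_spec i n) as [->|Hin].
  - assert (Hoff : forall k, (k < n)%nat -> kronecker n k = 0)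
      by (intros k Hk; unfold kronecker; destruct (Nat.eqb_spec n k); lia || lra).
    rewrite (proj2 (sum_lt_eq0_iff n (kronecker n)
                      (fun k Hk => Req_le _ _ (eq_sym (Hoff k Hk)))) Hoff).
    lra.
  - rewrite IH by lia. lra.
Qed.

(* The kernel at x_1 with the excesses removed: 0 if i = 1 or j = 1,
   2 if i = j >= 2, and -2 otherwise. *)
Definition base_kernel (i j : nat) : R :=
  nonzero i * (4 * kronecker i j - 2 * nonzero j).

Lemma dsum_base_kernel n :
  (1 <= n)%nat -> dsum n base_kernel = (INR n - 1) * (6 - 2 * INR n).
Proof.
  intros Hn. unfold dsum, base_kernel.
  rewrite (sum_lt_ext n _ (fun i => (6 - 2 * INR n) * nonzero i)).
  { rewrite sum_lt_scal, sum_nonzero by lia. lra. }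
  intros i Hi. rewrite sum_lt_scal.
  rewrite (sum_lt_ext n _ (fun j => 4 * kronecker i j + -2 * nonzero j))
    by (intros; lra).
  rewrite sum_lt_plus, !sum_lt_scal, sum_kronecker, sum_nonzero by lia. lra.
Qed.

Section DepthOfFirstPoint.

Context {X : Type} (d : X -> X -> R) (Hmet : is_metric d).
Variables (n : nat) (x : nat -> X).
Hypothesis Hcenter : forall i, (1 <= i < n)%nat -> x i <> x 0%nat.

Definition pair_excess (i j : nat) : R :=
  if (Nat.eqb i 0 || Nat.eqb j 0 || Nat.eqb i j)%bool then 0
  else excess d (x i) (x j) (x 0%nat).

Lemma h_kernel_split i j : (i < n)%nat -> (j < n)%nat ->
  h_kernel d (x i) (x j) (x 0%nat) = base_kernel i j + pair_excess i j.
Proof.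
  intros Hi Hj. unfold base_kernel, pair_excess, nonzero, kronecker.
  destruct (Nat.eqb_spec i 0) as [->|Hi0].
  { rewrite h_kernel_at_center by auto. simpl. lra. }
  destruct (Nat.eqb_spec j 0) as [->|Hj0].
  { rewrite h_kernel_at_center, (proj2 (Nat.eqb_neq i 0) Hi0) by auto. simpl. lra. }
  destruct (Nat.eqb_spec i j) as [<-|Hij]; simpl.
  - rewrite (h_kernel_diag d Hmet) by (auto; apply not_eq_sym, Hcenter; lia). lra.
  - rewrite (h_kernel_excess d Hmet) by (auto; apply not_eq_sym, Hcenter; lia). lra.
Qed.

Lemma pair_excess_nonneg i j : (i < n)%nat -> (j < n)%nat -> 0 <= pair_excess i j.
Proof.
  intros Hi Hj. unfold pair_excess.
  destruct (Nat.eqb_spec i 0), (Nat.eqb_spec j 0), (Nat.eqb_spec i j);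
    simpl; try lra.
  apply (excess_nonneg d Hmet); auto; apply not_eq_sym, Hcenter; lia.
Qed.

Lemma depth_first_point_decomposition : (1 <= n)%nat ->
  depth_discrete d n (fun _ => / INR n) x (x 0%nat) =
  1 + (1 - / INR n) * (1 - 3 / INR n) - / (2 * INR n ^ 2) * dsum n pair_excess.
Proof.
  intros Hn. assert (Hnr : 0 < INR n) by (apply lt_0_INR; lia).
  assert (Hsum : dsum n (fun i j => / INR n * / INR n * h_kernel d (x i) (x j) (x 0%nat))
                 = / INR n * / INR n * (dsum n base_kernel + dsum n pair_excess)).
  { unfold dsum. rewrite <- sum_lt_plus, <- sum_lt_scal.
    apply sum_lt_ext; intros i Hi.
    rewrite <- sum_lt_plus, <- sum_lt_scal.
    apply sum_lt_ext; intros j Hj. rewrite h_kernel_split by auto. reflexivity. }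
  unfold depth_discrete. fold (dsum n (fun i j => / INR n * / INR n *
                                        h_kernel d (x i) (x j) (x 0%nat))).
  rewrite Hsum, dsum_base_kernel by auto. field. lra.
Qed.

Lemma pair_excess_all_zero_iff :
  (forall i j, (i < n)%nat -> (j < n)%nat -> pair_excess i j = 0) <->
  (forall i j, (1 <= i < n)%nat -> (1 <= j < n)%nat -> i <> j ->
     d (x i) (x j) = d (x i) (x 0%nat) + d (x 0%nat) (x j)).
Proof.
  split.
  - intros Hz i j Hi Hj Hij.
    specialize (Hz i j ltac:(lia) ltac:(lia)). unfold pair_excess in Hz.
    destruct (Nat.eqb_spec i 0), (Nat.eqb_spec j 0), (Nat.eqb_spec i j);
      try lia.
    apply (excess_eq0_iff d Hmet) in Hz; auto; apply not_eq_sym, Hcenter; lia.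
  - intros Hbetween i j Hi Hj. unfold pair_excess.
    destruct (Nat.eqb_spec i 0), (Nat.eqb_spec j 0), (Nat.eqb_spec i j);
      simpl; auto.
    apply (excess_eq0_iff d Hmet); auto; try (apply not_eq_sym, Hcenter; lia).
    apply Hbetween; lia.
Qed.

End DepthOfFirstPoint.

Theorem lemma2 (X : Type) (d : X -> X -> R)
  (Hmet : is_metric d) (Hcomp : metric_complete d) (Hsep : metric_separable d)
  (n : nat) (Hn : (2 <= n)%nat) (x : nat -> X)
  (Hdist : forall i j, (i < n)%nat -> (j < n)%nat -> i <> j -> x i <> x j) :
  let D1 := depth_discrete d n (fun _ => / INR n) x (x 0%nat) in
  D1 <= 1 + (1 - / INR n) * (1 - 3 / INR n) /\
  (D1 = 1 + (1 - / INR n) * (1 - 3 / INR n) <->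
   forall i j, (1 <= i < n)%nat -> (1 <= j < n)%nat -> i <> j ->
     d (x i) (x j) = d (x i) (x 0%nat) + d (x 0%nat) (x j)).
Proof.
  intros D1.
  assert (Hn1 : (1 <= n)%nat) by lia.
  assert (Hcenter : forall i, (1 <= i < n)%nat -> x i <> x 0%nat)
    by (intros; apply Hdist; lia).
  assert (Hnonneg := pair_excess_nonneg d Hmet n x Hcenter).
  assert (Hscale : 0 < / (2 * INR n ^ 2))
    by (apply Rinv_0_lt_compat; pose proof (lt_0_INR n ltac:(lia)); nra).
  pose proof (dsum_nonneg n _ Hnonneg) as HS.
  unfold D1. rewrite depth_first_point_decomposition by auto.
  split; [nra|].
  rewrite <- pair_excess_all_zero_iff, <- dsum_eq0_iff by auto.
  split; intros E; nra.
Qed.
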